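(* For all real $x$ and $n\ge 1/2$ the following holds: \begin{equation*} -\sqrt{x^2/4+n+1/2}<\frac{U^{\prime} (n,x)}{U(n,x)}<-\sqrt{x^2 /4+n-1/2} . \end{equation*} The left inequality also holds for $n>-1/2$.
   Context: $U(a,x)$ denotes the standard parabolic cylinder function (as in the NIST Digital Library of Mathematical Functions, Chapter 12), i.e. the solution of $y''(x)-(x^2/4+a)y(x)=0$ that is recessive (decays) as $x\rightarrow+\infty$; $U'(a,x)$ is its derivative with respect to $x$. The parameter $n$ is real. *)

From Stdlib Require Import Reals.
From Coquelicot Require Import Coquelicot.
Open Scope R_scope.

(* [is_PCF_U a y dy] : y is a (nonzero) recessive solution of the Weber
   equation y''(x) = (x^2/4 + a) y(x) on all of R, with derivative dy.
   The recessive solution is unique up to a nonzero constant factor, so y is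
   a nonzero multiple c * U(a,.) of the standard parabolic cylinder function
   (DLMF 12), and dy = c * U'(a,.).  The ratio dy/y = U'(a,.)/U(a,.) is
   independent of the constant c. *)
Definition is_PCF_U (a : R) (y dy : R -> R) : Prop :=
  (forall x, is_derive y x (dy x)) /\
  (forall x, is_derive dy x ((x ^ 2 / 4 + a) * y x)) /\
  is_lim y p_infty 0 /\
  (exists x0, y x0 <> 0).

From Stdlib Require Import Reals Lra Psatz.
From Coquelicot Require Import Coquelicot.
Open Scope R_scope.

(* Put u± = y (y' ± x y / 2) and L± = y'^2 - (x^2/4 + n ± 1/2) y^2.  The Weber
   equation gives u±' = (y' ± x y / 2)^2 + (n ± 1/2) y^2, L+' = -u+ and
   L-' = u-, and the two bounds are exactly L+ < 0 and L- > 0.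
   For n > -1/2, u+ is increasing; were it positive somewhere, then u+' >= u+^2
   wherever |y| <= 1, and u+ would blow up in finite time.  So u+ < 0, L+ is
   increasing, and a positive value of L+ would keep |y'| bounded below,
   against y -> 0.  Hence L+ < 0.
   For n >= 1/2, u- is nondecreasing; were it nonnegative somewhere, y^2 would
   be nondecreasing near +oo, against y -> 0.  So u- < 0 and L- is decreasing.
   Since u+ < 0 makes x^4 y^2 bounded, L- >= -(x^2/4 + n) y^2 = O(x^-2), so a
   decreasing L- must stay positive. *)

Lemma mvt_interval (f df : R -> R) (a b : R) : a < b ->
  (forall x, a <= x <= b -> is_derive f x (df x)) ->
  exists c, a <= c <= b /\ f b - f a = df c * (b - a).
Proof.
  intros Hab Hd.
  destruct (MVT_gen f a b df) as [c [Hc Heq]].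
  - intros x Hx; rewrite Rmin_left, Rmax_right in Hx by lra; apply Hd; lra.
  - intros x Hx; rewrite Rmin_left, Rmax_right in Hx by lra.
    apply continuity_pt_filterlim, (ex_derive_continuous f).
    exists (df x); apply Hd; lra.
  - rewrite Rmin_left, Rmax_right in Hc by lra; exists c; split; [lra | exact Heq].
Qed.

Lemma derive_nonneg_le (f df : R -> R) (a b : R) : a <= b ->
  (forall x, a <= x <= b -> is_derive f x (df x)) ->
  (forall x, a <= x <= b -> 0 <= df x) -> f a <= f b.
Proof.
  intros Hab Hd Hpos.
  destruct (Req_dec a b) as [-> | Hne]; [lra |].
  destruct (mvt_interval f df a b) as [c [Hc Heq]]; [lra | exact Hd |].
  specialize (Hpos c Hc); nra.
Qed.

Lemma derive_pos_lt (f df : R -> R) (a b : R) : a < b ->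
  (forall x, a <= x <= b -> is_derive f x (df x)) ->
  (forall x, a <= x <= b -> 0 < df x) -> f a < f b.
Proof.
  intros Hab Hd Hpos.
  destruct (mvt_interval f df a b) as [c [Hc Heq]]; [exact Hab | exact Hd |].
  specialize (Hpos c Hc); nra.
Qed.

Lemma neg_of_nonpos_derive_pos (f df : R -> R) (x : R) :
  (forall t, is_derive f t (df t)) -> (forall t, 0 < df t) ->
  (forall t, f t <= 0) -> f x < 0.
Proof.
  intros Hd Hpos Hle.
  pose proof (derive_pos_lt f df x (x + 1) ltac:(lra) (fun t _ => Hd t) (fun t _ => Hpos t)).
  pose proof (Hle (x + 1)); lra.
Qed.

Lemma derive_nonpos_le (f df : R -> R) (a b : R) : a <= b ->
  (forall x, a <= x <= b -> is_derive f x (df x)) ->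
  (forall x, a <= x <= b -> df x <= 0) -> f b <= f a.
Proof.
  intros Hab Hd Hneg.
  enough (- f a <= - f b) by lra.
  apply (derive_nonneg_le (fun t => - f t) (fun t => - df t)); [exact Hab | |].
  - intros x Hx; apply (is_derive_opp f), Hd, Hx.
  - intros x Hx; specialize (Hneg x Hx); lra.
Qed.

Lemma is_lim_pinfty_0_small (f : R -> R) : is_lim f p_infty 0 ->
  forall eps, 0 < eps -> exists M, forall x, M < x -> Rabs (f x) < eps.
Proof.
  intros Hlim eps Heps.
  assert (Hball : Rbar_locally (Finite 0) (fun t => Rabs t < eps)).
  { exists (mkposreal eps Heps); intros t Ht.
    change (Rabs (t - 0) < eps) in Ht; rewrite Rminus_0_r in Ht; exact Ht. }
  destruct (Hlim _ Hball) as [M HM]; exists M; exact HM.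
Qed.

(* Gronwall: the weights [exp (K t)] and [exp (- K t)] make the energy monotone towards [p]. *)
Lemma energy_zero_propagates (E dE : R -> R) (K p x0 : R) :
  (forall t, is_derive E t (dE t)) ->
  (forall t, Rmin x0 p <= t <= Rmax x0 p -> 0 <= E t /\ Rabs (dE t) <= K * E t) ->
  E p = 0 -> E x0 = 0.
Proof.
  intros HdE Hbound Hp.
  assert (Hweighted : forall s t, is_derive (fun t => E t * exp (s * t)) t
                                   ((dE t + s * E t) * exp (s * t))).
  { intros s t; auto_derive; [eexists; apply HdE |].
    erewrite is_derive_unique by apply HdE; ring. }
  destruct (Rle_dec x0 p) as [Hle | Hgt].
  - rewrite Rmin_left, Rmax_right in Hbound by lra.
    assert (Hmono : E x0 * exp (K * x0) <= E p * exp (K * p)).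
    { apply (derive_nonneg_le _ _ x0 p Hle (fun t _ => Hweighted K t)).
      intros t Ht; destruct (Hbound t Ht) as [_ Hb]; apply Rabs_le_between in Hb.
      pose proof (exp_pos (K * t)); nra. }
    destruct (Hbound x0 ltac:(lra)) as [HE0 _]; pose proof (exp_pos (K * x0)); nra.
  - rewrite Rmin_right, Rmax_left in Hbound by lra.
    assert (Hmono : E x0 * exp (- K * x0) <= E p * exp (- K * p)).
    { apply (derive_nonpos_le _ _ p x0 ltac:(lra) (fun t _ => Hweighted (- K) t)).
      intros t Ht; destruct (Hbound t Ht) as [_ Hb]; apply Rabs_le_between in Hb.
      pose proof (exp_pos (- K * t)); nra. }
    destruct (Hbound x0 ltac:(lra)) as [HE0 _]; pose proof (exp_pos (- K * x0)); nra.
Qed.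

Lemma riccati_no_global_solution (u du : R -> R) (a : R) :
  (forall t, a <= t -> is_derive u t (du t)) ->
  (forall t, a <= t -> 0 < u t) ->
  (forall t, a <= t -> u t ^ 2 <= du t) -> False.
Proof.
  intros Hd Hpos Hric.
  set (b := a + / u a).
  pose proof (Rinv_0_lt_compat _ (Hpos a (Rle_refl a))) as Hinv.
  (* [- 1 / u - t] is nondecreasing, so [1 / u] decreases at least as fast as [t] grows. *)
  assert (Hmono : - / u a - a <= - / u b - b).
  { apply (derive_nonneg_le (fun t => - / u t - t) (fun t => du t / u t ^ 2 - 1));
      [unfold b; lra | |].
    - intros t Ht; specialize (Hpos t ltac:(lra)).
      auto_derive; [split; [eexists; apply Hd; lra | lra] |].
      erewrite is_derive_unique by (apply Hd; lra); field; lra.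
    - intros t Ht; specialize (Hpos t ltac:(lra)); specialize (Hric t ltac:(lra)).
      assert (1 <= du t / u t ^ 2); [|lra].
      apply Rmult_le_reg_r with (u t ^ 2); [nra |].
      unfold Rdiv; rewrite Rmult_assoc, Rinv_l by nra; lra. }
  pose proof (Rinv_0_lt_compat _ (Hpos b ltac:(unfold b; lra))).
  unfold b in Hmono at 2; lra.
Qed.

Lemma is_lim_pinfty_nondecreasing_le (f : R -> R) (l a : R) :
  is_lim f p_infty l -> (forall t, a <= t -> f a <= f t) -> f a <= l.
Proof.
  intros Hlim Hmono.
  destruct (Rle_lt_dec (f a) l) as [Hle | Hgt]; [exact Hle | exfalso].
  assert (Hball : Rbar_locally (Finite l) (fun z => z < f a)).
  { exists (mkposreal (f a - l) ltac:(lra)); intros z Hz.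
    change (Rabs (z - l) < f a - l) in Hz; apply Rabs_def2 in Hz; lra. }
  destruct (Hlim _ Hball) as [M HM].
  specialize (HM (Rmax a M + 1) ltac:(pose proof (Rmax_r a M); lra)).
  specialize (Hmono (Rmax a M + 1) ltac:(pose proof (Rmax_l a M); lra)); lra.
Qed.

Lemma is_lim_pinfty_0_derive_sq_not_bounded_below (f df : R -> R) (a eps : R) :
  is_lim f p_infty 0 -> (forall t, is_derive f t (df t)) -> 0 < eps ->
  (forall t, a <= t -> eps <= df t ^ 2) -> False.
Proof.
  intros Hlim Hd Heps Hbelow.
  destruct (is_lim_pinfty_0_small f Hlim 1 Rlt_0_1) as [M HM].
  set (s := Rmax a M + 1); set (T := 2 + 2 / eps).
  assert (Hs : a <= s /\ M < s) by (unfold s; pose proof (Rmax_l a M); pose proof (Rmax_r a M); lra).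
  assert (HT : 2 <= T /\ 2 <= eps * T).
  { unfold T; split; [pose proof (Rdiv_lt_0_compat 2 eps ltac:(lra) Heps); lra |].
    replace (eps * (2 + 2 / eps)) with (2 * eps + 2) by (field; lra); lra. }
  destruct (mvt_interval f df s (s + T)) as [c [Hc Heq]]; [lra | intros; apply Hd |].
  specialize (Hbelow c ltac:(lra)).
  pose proof (HM s ltac:(lra)) as Hfs; pose proof (HM (s + T) ltac:(lra)) as HfsT.
  apply Rabs_def2 in Hfs; apply Rabs_def2 in HfsT.
  replace (s + T - s) with T in Heq by ring.
  assert (4 <= df c ^ 2 * T ^ 2) by nra.
  assert ((f (s + T) - f s) ^ 2 = df c ^ 2 * T ^ 2) by (rewrite Heq; ring).
  nra.
Qed.

Lemma quartic_decay_not_quadratic_lower_bound (g : R -> R) (a C delta : R) :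
  0 < delta ->
  (forall t, a <= t -> delta <= t ^ 2 * g t) ->
  (forall t, a <= t -> t ^ 4 * g t <= C) -> False.
Proof.
  intros Hdelta Hlow Hdecay.
  set (t := Rmax a 1 + Rabs (C / delta) + 1).
  assert (Ht : a <= t /\ 1 <= t /\ C / delta < t).
  { pose proof (Rmax_l a 1); pose proof (Rmax_r a 1); pose proof (Rle_abs (C / delta)).
    unfold t; pose proof (Rabs_pos (C / delta)); lra. }
  specialize (Hlow t ltac:(lra)); specialize (Hdecay t ltac:(lra)).
  assert (HCt : C < delta * t).
  { replace C with (C / delta * delta) by (field; lra); nra. }
  assert (delta * t ^ 2 <= t ^ 4 * g t).
  { replace (t ^ 4 * g t) with (t ^ 2 * (t ^ 2 * g t)) by ring.
    rewrite (Rmult_comm delta); apply Rmult_le_compat_l; [nra | lra]. }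
  assert (delta * t <= delta * t ^ 2) by (apply Rmult_le_compat_l; nra).
  lra.
Qed.

Lemma neg_sqrt_lt_of_sq_lt (h A : R) : h ^ 2 < A -> - sqrt A < h.
Proof.
  intros Hh.
  assert (Habs : Rabs h < sqrt A).
  { rewrite <- sqrt_Rsqr_abs; apply sqrt_lt_1_alt; unfold Rsqr; nra. }
  pose proof (Rle_abs (- h)); rewrite Rabs_Ropp in *; lra.
Qed.

Lemma lt_neg_sqrt_of_lt_sq (h A : R) : h < 0 -> A < h ^ 2 -> h < - sqrt A.
Proof.
  intros Hneg Hh.
  destruct (Rle_lt_dec A 0) as [HA | HA].
  - rewrite sqrt_neg_0 by exact HA; lra.
  - enough (sqrt A < - h) by lra.
    rewrite <- (Rabs_left h), <- sqrt_Rsqr_abs by exact Hneg.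
    apply sqrt_lt_1_alt; unfold Rsqr; nra.
Qed.

Section Weber.

Variable n : R.
Variables y dy : R -> R.
Hypothesis Hy : forall x, is_derive y x (dy x).
Hypothesis Hdy : forall x, is_derive dy x ((x ^ 2 / 4 + n) * y x).

Local Ltac weber_derive :=
  auto_derive;
  [ repeat match goal with
    | |- _ /\ _ => split
    | |- True => exact I
    | |- ex_derive (fun _ => y _) _ => eexists; apply Hy
    | |- ex_derive (fun _ => dy _) _ => eexists; apply Hdy
    end
  | rewrite ?(is_derive_unique _ _ _ (Hy _)), ?(is_derive_unique _ _ _ (Hdy _)) ].

Definition u_plus t := y t * (dy t + t / 2 * y t).
Definition u_minus t := y t * (dy t - t / 2 * y t).
Definition L_plus t := dy t ^ 2 - (t ^ 2 / 4 + n + 1 / 2) * y t ^ 2.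
Definition L_minus t := dy t ^ 2 - (t ^ 2 / 4 + n - 1 / 2) * y t ^ 2.

Lemma is_derive_u_plus x :
  is_derive u_plus x ((dy x + x / 2 * y x) ^ 2 + (n + 1 / 2) * y x ^ 2).
Proof. unfold u_plus; weber_derive; field. Qed.

Lemma is_derive_u_minus x :
  is_derive u_minus x ((dy x - x / 2 * y x) ^ 2 + (n - 1 / 2) * y x ^ 2).
Proof. unfold u_minus; weber_derive; field. Qed.

Lemma is_derive_L_plus x : is_derive L_plus x (- u_plus x).
Proof. unfold L_plus, u_plus; weber_derive; field. Qed.

Lemma is_derive_L_minus x : is_derive L_minus x (u_minus x).
Proof. unfold L_minus, u_minus; weber_derive; field. Qed.

Lemma is_derive_y_sq x : is_derive (fun t => y t ^ 2) x (2 * y x * dy x).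
Proof. weber_derive; ring. Qed.

Lemma is_derive_energy x :
  is_derive (fun t => y t ^ 2 + dy t ^ 2) x (2 * y x * dy x * (1 + x ^ 2 / 4 + n)).
Proof. weber_derive; ring. Qed.

Lemma is_derive_quartic_weight x :
  is_derive (fun t => t ^ 4 * y t ^ 2) x (4 * x ^ 3 * y x ^ 2 + x ^ 4 * (2 * y x * dy x)).
Proof. weber_derive; ring. Qed.

Lemma weber_zero_data_eq0 p x0 : y p = 0 -> dy p = 0 -> y x0 = 0.
Proof.
  intros Hyp Hdyp.
  set (K := 1 + (p ^ 2 + x0 ^ 2) / 4 + Rabs n).
  assert (HE : y x0 ^ 2 + dy x0 ^ 2 = 0).
  { apply (energy_zero_propagates _ _ K p x0 is_derive_energy);
      [| rewrite Hyp, Hdyp; ring].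
    intros t Ht; split; [nra |].
    assert (Ht2 : t ^ 2 <= p ^ 2 + x0 ^ 2).
    { destruct (Rle_dec x0 p);
        [rewrite Rmin_left, Rmax_right in Ht | rewrite Rmin_right, Rmax_left in Ht];
        lra || (destruct (Rle_dec 0 t); nra). }
    assert (Hcoef : Rabs (1 + t ^ 2 / 4 + n) <= K).
    { unfold K; apply Rabs_le; pose proof (Rle_abs n); pose proof (Rle_abs (- n)).
      rewrite Rabs_Ropp in *; pose proof (pow2_ge_0 t); lra. }
    assert (Hprod : Rabs (2 * y t * dy t) <= y t ^ 2 + dy t ^ 2) by
      (apply Rabs_le; pose proof (pow2_ge_0 (y t + dy t)); pose proof (pow2_ge_0 (y t - dy t)); split; nra).
    rewrite Rabs_mult, Rmult_comm.
    apply Rmult_le_compat; auto using Rabs_pos. }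
  nra.
Qed.

Hypothesis Hlim : is_lim y p_infty 0.
Hypothesis Hnz : exists x0, y x0 <> 0.

Lemma weber_nondegenerate x : 0 < y x ^ 2 + dy x ^ 2.
Proof.
  destruct (Rlt_le_dec 0 (y x ^ 2 + dy x ^ 2)) as [Hpos | Hle]; [exact Hpos | exfalso].
  destruct Hnz as [x0 Hx0]; apply Hx0, (weber_zero_data_eq0 x); nra.
Qed.

Section LowerBound.

Hypothesis Hn : - (1 / 2) < n.

Lemma u_plus_le0 x0 : u_plus x0 <= 0.
Proof.
  destruct (Rle_lt_dec (u_plus x0) 0) as [Hle | Hpos]; [exact Hle | exfalso].
  destruct (is_lim_pinfty_0_small y Hlim 1 Rlt_0_1) as [M HM].
  set (a := Rmax x0 M + 1).
  assert (Ha : x0 <= a /\ M < a) by (unfold a; pose proof (Rmax_l x0 M); pose proof (Rmax_r x0 M); lra).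
  apply (riccati_no_global_solution u_plus _ a (fun t _ => is_derive_u_plus t)).
  - intros t Ht.
    enough (u_plus x0 <= u_plus t) by lra.
    apply (derive_nonneg_le _ _ x0 t ltac:(lra) (fun s _ => is_derive_u_plus s)).
    intros s _; pose proof (pow2_ge_0 (dy s + s / 2 * y s)); pose proof (pow2_ge_0 (y s)); nra.
  - intros t Ht.
    specialize (HM t ltac:(lra)); apply Rabs_def2 in HM.
    unfold u_plus; rewrite Rpow_mult_distr.
    assert (Hy1 : y t ^ 2 <= 1) by (simpl; nra).
    pose proof (pow2_ge_0 (dy t + t / 2 * y t)); pose proof (pow2_ge_0 (y t)).
    assert (0 <= (1 - y t ^ 2) * (dy t + t / 2 * y t) ^ 2) by (apply Rmult_le_pos; lra).
    assert (0 <= (n + 1 / 2) * y t ^ 2) by (apply Rmult_le_pos; lra).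
    lra.
Qed.

Lemma u_plus_lt0 x : u_plus x < 0.
Proof.
  apply (neg_of_nonpos_derive_pos _ _ x is_derive_u_plus); [| exact u_plus_le0].
  intros t; pose proof (weber_nondegenerate t) as Hnd.
  pose proof (pow2_ge_0 (dy t + t / 2 * y t)).
  destruct (Req_dec (y t) 0) as [Hyt | Hyt].
  - rewrite Hyt in *; simpl in *; lra.
  - assert (0 < (n + 1 / 2) * y t ^ 2) by (apply Rmult_lt_0_compat; [lra | apply pow2_gt_0, Hyt]).
    lra.
Qed.

Lemma L_plus_le0 x0 : L_plus x0 <= 0.
Proof.
  destruct (Rle_lt_dec (L_plus x0) 0) as [Hle | Hpos]; [exact Hle | exfalso].
  apply (is_lim_pinfty_0_derive_sq_not_bounded_below y dy x0 (L_plus x0) Hlim Hy Hpos).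
  intros t Ht.
  assert (L_plus x0 <= L_plus t).
  { apply (derive_nonneg_le _ _ x0 t Ht (fun s _ => is_derive_L_plus s)).
    intros s _; pose proof (u_plus_lt0 s); lra. }
  unfold L_plus in *; nra.
Qed.

Lemma L_plus_lt0 x : L_plus x < 0.
Proof.
  apply (neg_of_nonpos_derive_pos _ _ x is_derive_L_plus); [| exact L_plus_le0].
  intros t; pose proof (u_plus_lt0 t); lra.
Qed.

Lemma y_neq0 x : y x <> 0.
Proof.
  intros Hyx; pose proof (L_plus_lt0 x) as HL; unfold L_plus in HL.
  rewrite Hyx in HL; nra.
Qed.

Lemma logderiv_gt x : - sqrt (x ^ 2 / 4 + n + 1 / 2) < dy x / y x.
Proof.
  apply neg_sqrt_lt_of_sq_lt.
  pose proof (L_plus_lt0 x) as HL; unfold L_plus in HL.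
  pose proof (y_neq0 x) as Hyx.
  replace (dy x) with (dy x / y x * y x) in HL by (field; exact Hyx).
  apply Rmult_lt_reg_r with (y x ^ 2); [nra | nra].
Qed.

End LowerBound.

Section UpperBound.

Hypothesis Hn : 1 / 2 <= n.

Let Hn_lower : - (1 / 2) < n.
Proof. lra. Qed.

Lemma u_minus_lt0 x0 : u_minus x0 < 0.
Proof.
  destruct (Rlt_le_dec (u_minus x0) 0) as [Hlt | Hge]; [exact Hlt | exfalso].
  set (a := Rmax x0 0).
  assert (Ha : x0 <= a /\ 0 <= a) by (unfold a; pose proof (Rmax_l x0 0); pose proof (Rmax_r x0 0); lra).
  apply (y_neq0 Hn_lower a).
  (* [u_minus >= 0] beyond [x0] makes [y^2] nondecreasing beyond [a], against [y -> 0]. *)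
  assert (Hsq : y a ^ 2 <= 0).
  { apply (is_lim_pinfty_nondecreasing_le (fun t => y t ^ 2)).
    - apply (is_lim_ext (fun t => y t * y t)); [intros; ring |].
      replace (Finite 0) with (Rbar_mult 0 0) by (simpl; f_equal; ring).
      apply is_lim_mult; [exact Hlim | exact Hlim | exact I].
    - intros t Ht.
      apply (derive_nonneg_le _ _ a t Ht (fun s _ => is_derive_y_sq s)).
      intros s Hs.
      assert (0 <= u_minus s).
      { apply Rle_trans with (u_minus x0); [exact Hge |].
        apply (derive_nonneg_le _ _ x0 s ltac:(lra) (fun r _ => is_derive_u_minus r)).
        intros r _; pose proof (pow2_ge_0 (dy r - r / 2 * y r)); pose proof (pow2_ge_0 (y r)); nra. }
      unfold u_minus in *; nra. }
  nra.
Qed.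

Lemma quartic_weight_le t : 2 <= t -> t ^ 4 * y t ^ 2 <= 2 ^ 4 * y 2 ^ 2.
Proof.
  intros Ht.
  apply (derive_nonpos_le _ _ 2 t Ht (fun s _ => is_derive_quartic_weight s)).
  intros s Hs; pose proof (u_plus_lt0 Hn_lower s) as Hu.
  (* [2 y dy = 2 u_plus - s y^2] *)
  replace (4 * s ^ 3 * y s ^ 2 + s ^ 4 * (2 * y s * dy s))
    with (- (s ^ 3 * y s ^ 2 * (s ^ 2 - 4)) + 2 * s ^ 4 * u_plus s) by (unfold u_plus; field).
  assert (0 <= s ^ 3 * y s ^ 2 * (s ^ 2 - 4)).
  { apply Rmult_le_pos; [apply Rmult_le_pos; [apply pow_le; lra | apply pow2_ge_0] | nra]. }
  assert (0 < s ^ 4) by (apply pow_lt; lra).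
  nra.
Qed.

Lemma L_minus_pos x : 0 < L_minus x.
Proof.
  destruct (Rlt_le_dec 0 (L_minus x)) as [Hpos | Hle]; [exact Hpos | exfalso].
  assert (Hdecr : forall a b, a <= b -> L_minus b <= L_minus a).
  { intros a b Hab; apply (derive_nonpos_le _ _ a b Hab (fun t _ => is_derive_L_minus t)).
    intros t _; pose proof (u_minus_lt0 t); lra. }
  assert (Hstep : L_minus (x + 1) < L_minus x).
  { enough (- L_minus x < - L_minus (x + 1)) by lra.
    apply (derive_pos_lt (fun t => - L_minus t) (fun t => - u_minus t) x (x + 1)); [lra | |].
    - intros t _; apply (is_derive_opp L_minus), is_derive_L_minus.
    - intros t _; pose proof (u_minus_lt0 t); lra. }
  set (delta := - L_minus (x + 1)).
  apply (quartic_decay_not_quadratic_lower_bound (fun t => y t ^ 2)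
           (Rmax (x + 1) (2 * Rabs n + 2)) (2 ^ 4 * y 2 ^ 2) (2 * delta)).
  - unfold delta; lra.
  - intros t Ht.
    pose proof (Rmax_l (x + 1) (2 * Rabs n + 2)); pose proof (Rmax_r (x + 1) (2 * Rabs n + 2)).
    pose proof (Rle_abs n); pose proof (Hdecr (x + 1) t ltac:(lra)) as HL.
    assert (Hcoef : t ^ 2 / 4 + n - 1 / 2 <= t ^ 2 / 2) by (simpl; nra).
    assert ((t ^ 2 / 4 + n - 1 / 2) * y t ^ 2 <= t ^ 2 / 2 * y t ^ 2)
      by (apply Rmult_le_compat_r; [apply pow2_ge_0 | exact Hcoef]).
    pose proof (pow2_ge_0 (dy t)); unfold delta, L_minus in *; lra.
  - intros t Ht; apply quartic_weight_le.
    pose proof (Rmax_r (x + 1) (2 * Rabs n + 2)); pose proof (Rabs_pos n); lra.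
Qed.

Lemma logderiv_lt x : dy x / y x < - sqrt (x ^ 2 / 4 + n - 1 / 2).
Proof.
  pose proof (y_neq0 Hn_lower x) as Hyx.
  pose proof (L_minus_pos x) as HL; pose proof (u_plus_lt0 Hn_lower x) as Hu;
    pose proof (u_minus_lt0 x) as Hv; unfold L_minus, u_plus, u_minus in *.
  set (h := dy x / y x) in *.
  assert (Hdy_eq : dy x = h * y x) by (unfold h; field; exact Hyx).
  rewrite Hdy_eq in HL, Hu, Hv.
  apply lt_neg_sqrt_of_lt_sq.
  - (* [u_plus + u_minus = 2 h y^2] *)
    assert (h * y x ^ 2 < 0) by nra; nra.
  - apply Rmult_lt_reg_r with (y x ^ 2); nra.
Qed.

End UpperBound.

End Weber.

Theorem theorem12 :
  forall (n : R) (y dy : R -> R),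
    is_PCF_U n y dy ->
    (1 / 2 <= n ->
       forall x : R, y x <> 0 /\
         - sqrt (x ^ 2 / 4 + n + 1 / 2) < dy x / y x /\
         dy x / y x < - sqrt (x ^ 2 / 4 + n - 1 / 2)) /\
    (- (1 / 2) < n ->
       forall x : R, y x <> 0 /\
         - sqrt (x ^ 2 / 4 + n + 1 / 2) < dy x / y x).
Proof.
  intros n y dy [Hy [Hdy [Hlim Hnz]]]; split.
  - intros Hn x; assert (Hn_lower : - (1 / 2) < n) by lra.
    split; [exact (y_neq0 n y dy Hy Hdy Hlim Hnz Hn_lower x) |].
    split; [exact (logderiv_gt n y dy Hy Hdy Hlim Hnz Hn_lower x) |].
    exact (logderiv_lt n y dy Hy Hdy Hlim Hnz Hn x).
  - intros Hn x; split.
    + exact (y_neq0 n y dy Hy Hdy Hlim Hnz Hn x).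
    + exact (logderiv_gt n y dy Hy Hdy Hlim Hnz Hn x).
Qed.
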